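(* Consider the model and the two-stage decision procedure described in the context, and let $W(\gamma_t,p_t)=\sup\{P_{\mathrm e}(\gamma_t,p_t,\mathbf t,P_{\mathrm{FA,M}},P_{\mathrm{MD,M}}):\ \mathbf t\in\{0,1\}^N,\ \sum_i(1-t_i)\le\bar mN,\ P_{\mathrm{FA,M}},P_{\mathrm{MD,M}}\in[0,1]\}$. Let $\Gamma_t=\{p_\alpha(a\mid1)/p_\alpha(a\mid0): a\in\mathcal A\}$. Then the minimal value of $W(\gamma_t,p_t)$ over $\gamma_t>0$, $p_t\in[0,1]$ can be achieved with $\gamma_t\in\Gamma_t$; that is, $\inf_{\gamma_t>0,\,p_t\in[0,1]}W(\gamma_t,p_t)=\inf_{\gamma_t\in\Gamma_t,\,p_t\in[0,1]}W(\gamma_t,p_t)$.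
   Context: There are $N$ robots indexed by $i\in\{1,\dots,N\}$ and $\bar m\in[0,1]$ is a known upper bound on the proportion of malicious robots. A binary event $\Xi\in\{0,1\}$ has prior probabilities $\Pr(\Xi=0),\Pr(\Xi=1)>0$; $\mathcal H_0$ means $\Xi=0$, $\mathcal H_1$ means $\Xi=1$. An unknown deterministic trust vector $\mathbf t\in\{0,1\}^N$ indicates legitimate ($t_i=1$) or malicious ($t_i=0$) robots. Given $\Xi$ and $\mathbf t$, the measurements $Y_i\in\{0,1\}$ are independent with $\Pr(Y_i=1\mid\Xi=0)=P_{\mathrm{FA,L}}$, $\Pr(Y_i=0\mid\Xi=1)=P_{\mathrm{MD,L}}$ if $t_i=1$ and $\Pr(Y_i=1\mid\Xi=0)=P_{\mathrm{FA,M}}$, $\Pr(Y_i=0\mid\Xi=1)=P_{\mathrm{MD,M}}$ if $t_i=0$, where $P_{\mathrm{FA,L}},P_{\mathrm{MD,L}}\in(0,0.5)$ and $P_{\mathrm{FA,M}},P_{\mathrm{MD,M}}\in[0,1]$. Trust values $\alpha_i$ take values in a finite set $\mathcal A$; given $\mathbf t$ they are independent with pmf $p_\alpha(\cdot\mid t_i)$, independent of $\Xi$ and the measurements; $p_\alpha(a\mid0)p_\alpha(a\mid1)\notin\{0,1\}$ for all $a\in\mathcal A$. Two-stage procedure with parameters $\gamma_t>0$, $p_t\in[0,1]$: $\hat t_i=1$ if $p_\alpha(\alpha_i\mid1)/p_\alpha(\alpha_i\mid0)>\gamma_t$, $\hat t_i=0$ if it is $<\gamma_t$, and on equality $\hat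 t_i=1$ with probability $p_t$ (independently), else $0$. With $\gamma_{\mathrm{TS}}=\log(\Pr(\Xi=0)/\Pr(\Xi=1))$, $w_1=\log\frac{1-P_{\mathrm{MD,L}}}{P_{\mathrm{FA,L}}}$, $w_0=\log\frac{1-P_{\mathrm{FA,L}}}{P_{\mathrm{MD,L}}}$, $S_N=\sum_i\hat t_i[w_1Y_i-w_0(1-Y_i)]$, define $P_{\mathrm{FA}}=\Pr(S_N\ge\gamma_{\mathrm{TS}}\mid\mathcal H_0)$, $P_{\mathrm{MD}}=\Pr(S_N<\gamma_{\mathrm{TS}}\mid\mathcal H_1)$ and $P_{\mathrm e}(\gamma_t,p_t,\mathbf t,P_{\mathrm{FA,M}},P_{\mathrm{MD,M}})=\Pr(\Xi=0)P_{\mathrm{FA}}+\Pr(\Xi=1)P_{\mathrm{MD}}$. *)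

From HB Require Import structures.
From mathcomp Require Import all_boot all_order all_algebra.
From mathcomp Require Import all_classical all_reals all_analysis.
Set Implicit Arguments. Unset Strict Implicit. Unset Printing Implicit Defensive.
Import Order.TTheory GRing.Theory Num.Theory.
Local Open Scope ring_scope.
Local Open Scope classical_set_scope.

Section Model.
Variable R : realType.
Variable N : nat.
Variable A : finType.
(* palpha b a = p_alpha(a | b) *)
Variable palpha : bool -> A -> R.
(* pi0 = Pr(Xi = 0); Pr(Xi = 1) = 1 - pi0 *)
Variable pi0 : R.
Variables PFAL PMDL : R.

Definition b2R (b : bool) : R := if b then 1 else 0.

Definition lratio (a : A) : R := palpha true a / palpha false a.

(* first-stage trust decision, given trust value a and tie-breaking coin u *)
Definition that (gt : R) (a : A) (u : bool) : bool :=
  if lratio a > gt then true else if lratio a == gt then u else false.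

Definition gammaTS : R := ln (pi0 / (1 - pi0)).
Definition w1 : R := ln ((1 - PMDL) / PFAL).
Definition w0 : R := ln ((1 - PFAL) / PMDL).

Definition SN (gt : R) (al : {ffun 'I_N -> A}) (u y : {ffun 'I_N -> bool}) : R :=
  \sum_(i < N) b2R (that gt (al i) (u i)) * (w1 * b2R (y i) - w0 * (1 - b2R (y i))).

(* Pr(Y_i = y | Xi = xi, t_i) *)
Definition pY (PFAM PMDM : R) (xi ti y : bool) : R :=
  let pfa := if ti then PFAL else PFAM in
  let pmd := if ti then PMDL else PMDM in
  if xi then (if y then 1 - pmd else pmd) else (if y then pfa else 1 - pfa).

Definition pU (pt : R) (u : bool) : R := if u then pt else 1 - pt.

(* Pr(E | Xi = xi) for an event E on (alpha, coins, Y), given t *)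
Definition condProb (pt PFAM PMDM : R) (t : {ffun 'I_N -> bool}) (xi : bool)
  (E : {ffun 'I_N -> A} -> {ffun 'I_N -> bool} -> {ffun 'I_N -> bool} -> bool) : R :=
  \sum_(al : {ffun 'I_N -> A}) \sum_(u : {ffun 'I_N -> bool}) \sum_(y : {ffun 'I_N -> bool})
    (\prod_(i < N) palpha (t i) (al i)) * (\prod_(i < N) pU pt (u i)) *
    (\prod_(i < N) pY PFAM PMDM xi (t i) (y i)) * b2R (E al u y).

Definition PFA (gt pt : R) t (PFAM PMDM : R) : R :=
  condProb pt PFAM PMDM t false (fun al u y => SN gt al u y >= gammaTS).
Definition PMD (gt pt : R) t (PFAM PMDM : R) : R :=
  condProb pt PFAM PMDM t true (fun al u y => SN gt al u y < gammaTS).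

Definition Pe (gt pt : R) (t : {ffun 'I_N -> bool}) (PFAM PMDM : R) : R :=
  pi0 * PFA gt pt t PFAM PMDM + (1 - pi0) * PMD gt pt t PFAM PMDM.

Variable mbar : R.

Definition admissible (t : {ffun 'I_N -> bool}) : Prop :=
  (#|[set i | ~~ t i]|)%:R <= mbar * N%:R.

Definition worstPe (gt pt : R) : R :=
  sup [set x | exists t PFAM PMDM, admissible t /\ 0 <= PFAM <= 1 /\
                  0 <= PMDM <= 1 /\ x = Pe gt pt t PFAM PMDM].

Definition GammaT : set R := [set lratio a | a in [set: A]].

End Model.

From HB Require Import structures.
From mathcomp Require Import all_boot all_order all_algebra.
From mathcomp Require Import all_classical all_reals all_analysis.
From mathcomp Require Import ring.
Import Order.TTheory GRing.Theory Num.Theory.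
Local Open Scope ring_scope.
Local Open Scope classical_set_scope.

(* The error probability depends on the threshold [gt] and the tie-breaking
   probability [pt] only through the trust decision they induce on the coins
   that occur with positive probability.  For [gt] outside [GammaT] no ties
   occur and the decision is [gt < lratio a]; the same decision is obtained
   from the smallest likelihood ratio above [gt] with ties broken towards
   trust ([pt = 1]), or, when no ratio exceeds [gt], from the largest ratio
   with ties broken towards distrust ([pt = 0]).  Hence both sets of
   worst-case errors coincide, and so do their infima. *)

Section TrustRule.
Variable R : realType.
Variable N : nat.
Variable A : finType.
Variable palpha : bool -> A -> R.
Variables pi0 PFAL PMDL mbar : R.

Local Notation vec T := {ffun 'I_N -> T}.
Local Notation condP := (condProb palpha PFAL PMDL).

Definition realizes (gt pt : R) (c : A -> bool) : Prop :=
  forall a u, pU pt u != 0 -> that palpha gt a u = c a.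

Definition SN_rule (c : A -> bool) (al : vec A) (y : vec bool) : R :=
  \sum_(i < N) b2R R (c (al i)) *
    (w1 PFAL PMDL * b2R R (y i) - w0 PFAL PMDL * (1 - b2R R (y i))).

Lemma sum_prod_pU (pt : R) : \sum_(u : vec bool) \prod_(i < N) pU pt (u i) = 1.
Proof.
rewrite -(bigA_distr_bigA (fun (i : 'I_N) b => pU pt b)) /=.
by apply: big1 => i _; rewrite big_bool /= addrC subrK.
Qed.

Lemma condProb_ext (pt FM MM : R) t xi E1 E2 :
  (forall (al : vec A) (u y : vec bool),
     \prod_(i < N) pU pt (u i) != 0 -> E1 al u y = E2 al u y) ->
  condP pt FM MM t xi E1 = condP pt FM MM t xi E2.
Proof.
move=> E12; apply: eq_bigr => al _; apply: eq_bigr => u _; apply: eq_bigr => y _.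
have [->|/E12 ->] := eqVneq (\prod_(i < N) pU pt (u i)) 0; last by [].
by rewrite !mulr0 !mul0r.
Qed.

Lemma condProb_coin_free (pt FM MM : R) t xi (E : vec A -> vec bool -> bool) :
  condP pt FM MM t xi (fun al _ y => E al y) =
  \sum_(al : vec A) \sum_(y : vec bool)
    (\prod_(i < N) palpha (t i) (al i)) *
    (\prod_(i < N) pY PFAL PMDL FM MM xi (t i) (y i)) * b2R R (E al y).
Proof.
apply: eq_bigr => al _.
transitivity (\sum_(u : vec bool) (\prod_(i < N) pU pt (u i)) *
  \sum_(y : vec bool) ((\prod_(i < N) palpha (t i) (al i)) *
     (\prod_(i < N) pY PFAL PMDL FM MM xi (t i) (y i)) * b2R R (E al y))).
  by apply: eq_bigr => u _; rewrite mulr_sumr; apply: eq_bigr => y _; ring.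
by rewrite -mulr_suml sum_prod_pU mul1r.
Qed.

Lemma SN_realizes {gt pt c} (al : vec A) (u y : vec bool) :
  realizes gt pt c -> \prod_(i < N) pU pt (u i) != 0 ->
  SN palpha PFAL PMDL gt al u y = SN_rule c al y.
Proof.
move=> gt_c /prodf_neq0 u_pos; apply: eq_bigr => i _.
by rewrite gt_c ?u_pos.
Qed.

Lemma Pe_realizes {gt pt gt' pt' c} (t : vec bool) FM MM :
  realizes gt pt c -> realizes gt' pt' c ->
  Pe palpha pi0 PFAL PMDL gt pt t FM MM = Pe palpha pi0 PFAL PMDL gt' pt' t FM MM.
Proof.
have coin_free g p xi (P : R -> bool) : realizes g p c ->
    condP p FM MM t xi (fun al u y => P (SN palpha PFAL PMDL g al u y)) =
    condP p FM MM t xi (fun al _ y => P (SN_rule c al y)).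
  by move=> g_c; apply: condProb_ext => al u y /(SN_realizes al u y g_c) ->.
move=> gt_c gt'_c; rewrite /Pe /PFA /PMD.
rewrite !(coin_free gt pt _ (fun s => gammaTS pi0 <= s)) //.
rewrite !(coin_free gt pt _ (fun s => s < gammaTS pi0)) //.
rewrite !(coin_free gt' pt' _ (fun s => gammaTS pi0 <= s)) //.
rewrite !(coin_free gt' pt' _ (fun s => s < gammaTS pi0)) //.
by rewrite !condProb_coin_free.
Qed.

Lemma worstPe_realizes {gt pt gt' pt' c} :
  realizes gt pt c -> realizes gt' pt' c ->
  worstPe N palpha pi0 PFAL PMDL mbar gt pt = worstPe N palpha pi0 PFAL PMDL mbar gt' pt'.
Proof.
move=> gt_c gt'_c; rewrite /worstPe; congr sup; apply/seteqP.
by split=> x [t [FM [MM [? [? [? ->]]]]]]; exists t, FM, MM;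
  rewrite (Pe_realizes t FM MM gt_c gt'_c).
Qed.

Lemma realizes_off_GammaT gt pt :
  gt \notin GammaT palpha -> realizes gt pt (fun a => gt < lratio palpha a).
Proof.
move=> gt_off a u _; rewrite /that.
have -> : (lratio palpha a == gt) = false.
  by apply: contraNF gt_off => /eqP <-; apply/mem_set; exists a.
by case: ltP.
Qed.

Lemma realizes_trust_ties r : realizes r 1 (fun a => r <= lratio palpha a).
Proof.
move=> a [] /=; last by rewrite subrr eqxx.
by move=> _; rewrite /that le_eqVlt eq_sym; case: (r < lratio palpha a); case: eqP.
Qed.

Lemma realizes_distrust_ties r : realizes r 0 (fun a => r < lratio palpha a).
Proof.
move=> a [] /=; first by rewrite eqxx.
by move=> _; rewrite /that if_same; case: (r < lratio palpha a).
Qed.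

Lemma realizes_ext {gt pt c c'} : c =1 c' -> realizes gt pt c -> realizes gt pt c'.
Proof. by move=> cc' gt_c a u /gt_c ->. Qed.

Lemma worstPe_on_GammaT (a0 : A) (gt pt : R) : 0 <= pt <= 1 ->
  exists gt' pt', gt' \in GammaT palpha /\ 0 <= pt' <= 1 /\
    worstPe N palpha pi0 PFAL PMDL mbar gt pt =
    worstPe N palpha pi0 PFAL PMDL mbar gt' pt'.
Proof.
move=> pt01; have [gt_on|gt_off] := boolP (gt \in GammaT palpha).
  by exists gt, pt.
have gt_rule := realizes_off_GammaT gt pt gt_off.
have ratio_on a : lratio palpha a \in GammaT palpha by apply/mem_set; exists a.
have [a1 gt_a1|none_above] := pickP (fun a => gt < lratio palpha a).
  have [am gt_am am_min] :=
    arg_minP (P := fun a => gt < lratio palpha a) (lratio palpha) gt_a1.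
  exists (lratio palpha am), 1; split=> //; split; first by rewrite ler01 lexx.
  apply: worstPe_realizes gt_rule (realizes_ext _ (realizes_trust_ties _)) => a.
  case: (ltP gt (lratio palpha a)) => [/am_min -> //|le_a].
  by apply/negbTE; rewrite -ltNge (le_lt_trans le_a gt_am).
have [am _ am_max] := arg_maxP (P := xpredT) (lratio palpha) (isT : xpredT a0).
exists (lratio palpha am), 0; split=> //; split; first by rewrite lexx ler01.
apply: worstPe_realizes gt_rule (realizes_ext _ (realizes_distrust_ties _)) => a.
by rewrite none_above; apply/negbTE; rewrite -leNgt; apply: am_max.
Qed.

End TrustRule.

Lemma lratio_gt0 (R : realType) (A : finType) (palpha : bool -> A -> R) a :
  (forall b a, 0 <= palpha b a) -> palpha false a * palpha true a != 0 ->
  0 < lratio palpha a.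
Proof.
move=> pa_ge0; rewrite mulf_eq0 negb_or => /andP [pa0 pa1].
by rewrite divr_gt0 // lt0r ?pa0 ?pa1 ?pa_ge0.
Qed.

Theorem lemma3 (R : realType) (N : nat) (A : finType)
  (palpha : bool -> A -> R) (pi0 PFAL PMDL mbar : R)
  (Hmbar : 0 <= mbar <= 1)
  (Hpi0 : 0 < pi0 < 1)
  (HPFAL : 0 < PFAL < 1 / 2) (HPMDL : 0 < PMDL < 1 / 2)
  (Hpa_ge0 : forall b a, 0 <= palpha b a)
  (Hpa_sum : forall b, \sum_(a : A) palpha b a = 1)
  (Hpa_nd : forall a, palpha false a * palpha true a != 0 /\
                      palpha false a * palpha true a != 1) :
  inf [set W | exists gt pt, 0 < gt /\ 0 <= pt <= 1 /\
          W = worstPe N palpha pi0 PFAL PMDL mbar gt pt]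
  = inf [set W | exists gt pt, gt \in GammaT palpha /\ 0 <= pt <= 1 /\
          W = worstPe N palpha pi0 PFAL PMDL mbar gt pt].
Proof.
have a0 : A.
  case: (pickP (fun _ : A => true)) => [a0 _ | A_empty]; first exact: a0.
  by exfalso; move/eqP: (oner_neq0 R); rewrite -(Hpa_sum true) (big_pred0 _ _ _ _ A_empty).
congr inf; apply/seteqP; split=> W [gt [pt [gt_ok [pt01 ->]]]].
  have [gt' [pt' [? [? ->]]]] :=
    worstPe_on_GammaT _ N _ palpha pi0 PFAL PMDL mbar a0 gt pt pt01.
  by exists gt', pt'.
exists gt, pt; split=> //; move/set_mem: gt_ok => [a _ <-].
by apply: lratio_gt0 => //; case: (Hpa_nd a).
Qed.
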